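(* For all positive integers $\alpha,\beta,p$, $$C(\alpha,\beta,p)\ge\max\left\{\frac{C(\alpha,1,p)}{\beta},\frac{C(1,\beta,p)}{\alpha}\right\}.$$
   Context: Memory cells are binary; cell-state vectors of $n$ cells lie in $\{0,1\}^n$. A code on $n$ cells consists, for each write $i\ge1$, of a real $R_i\ge0$, an encoder $\mathcal{E}_i:\{1,\ldots,\lfloor2^{nR_i}\rfloor\}\times\{0,1\}^n\to\{0,1\}^n$ and decoder $\mathcal{D}_i$ with $\mathcal{D}_i(\mathcal{E}_i(m,\mathbf{u}))=m$ (both may depend on $i$). Starting from $\mathbf{v}_0=\mathbf{0}$, messages produce states $\mathbf{v}_i=\mathcal{E}_i(m_i,\mathbf{v}_{i-1})$. The code is $(\alpha,\beta,p)$-constrained if for every message sequence, every $i\ge0$ and every $1\le j\le n-\beta+1$, $|\{(k,\ell): v_{i+k,j+\ell}\ne v_{i+k+1,j+\ell}, 0\le k<\alpha, 0\le\ell<\beta\}|\le p$ (total rewrite cost, measured by Hamming distance between consecutive states, of any $\beta$ contiguous cells over any $\alpha$ consecutive rewrites is at most $p$). Rate: $\lim_{m\to\infty}\frac1m\sum_{i=1}^mR_i$. $C_n(\alpha,\beta,p)$ is the supremum of rates of $(\alpha,\beta,p)$-constrained codes on $n$ cells and $C(\alpha,\beta,p)=\lim_{n\to\infty}C_n(\alpha,\beta,p)$. *)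

From HB Require Import structures.
From mathcomp Require Import all_boot all_order all_algebra.
From mathcomp Require Import all_classical all_reals all_analysis.
Import numFieldNormedType.Exports.
Set Implicit Arguments. Unset Strict Implicit. Unset Printing Implicit Defensive.
Import Order.TTheory GRing.Theory Num.Theory.
Local Open Scope ring_scope.
Local Open Scope classical_set_scope.

Definition state (n : nat) := n.-tuple bool.

(* A code on n cells: for each write i >= 1 a rate R_i, an encoder E_i and a
   decoder D_i.  Messages are the naturals 1..floor(2^(n R_i)). *)
Record code (R : realType) (n : nat) := Code {
  rate_at : nat -> R;
  enc : nat -> nat -> state n -> state n;
  dec : nat -> state n -> nat
}.

Section Codes.
Variables (R : realType) (n : nat).

Definition nmsg (c : code R n) (i : nat) : nat :=
  Num.truncn (2 `^ (n%:R * rate_at c i)).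

Definition valid_code (c : code R n) : Prop :=
  forall i, (1 <= i)%N ->
    0 <= rate_at c i /\
    forall m u, (1 <= m <= nmsg c i)%N -> dec c i (enc c i m u) = m.

Definition msg_seq (c : code R n) (ms : nat -> nat) : Prop :=
  forall i, (1 <= i)%N -> (1 <= ms i <= nmsg c i)%N.

Fixpoint states (c : code R n) (ms : nat -> nat) (i : nat) : state n :=
  match i with
  | 0 => [tuple of nseq n false]
  | i'.+1 => enc c i'.+1 (ms i'.+1) (states c ms i')
  end.

Definition window_cost (c : code R n) (ms : nat -> nat)
    (alpha beta i j : nat) : nat :=
  \sum_(k < alpha) \sum_(l < beta)
     (nth false (states c ms (i + k)) (j + l)
        != nth false (states c ms (i + k).+1) (j + l)).

(* (alpha,beta,p)-constrained (windows: 0 <= j, j + beta <= n, i.e. the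
   paper's 1 <= j <= n - beta + 1) *)
Definition constrained (alpha beta p : nat) (c : code R n) : Prop :=
  forall ms, msg_seq c ms ->
  forall i j, (j + beta <= n)%N -> (window_cost c ms alpha beta i j <= p)%N.

Definition has_rate (c : code R n) (r : R) : Prop :=
  (fun m : nat => (\sum_(1 <= i < m.+2) rate_at c i) / (m.+1)%:R) @ \oo --> r.

Definition Cn (alpha beta p : nat) : R :=
  sup [set r | exists c : code R n,
         [/\ valid_code c, constrained alpha beta p c & has_rate c r]].

End Codes.

Definition Cseq (R : realType) (alpha beta p : nat) : nat -> R :=
  fun n => Cn R n alpha beta p.

Definition Ccap (R : realType) (alpha beta p : nat) : R :=
  limn (Cseq R alpha beta p).

From Pilot Require Import Defs.
From HB Require Import structures.
From mathcomp Require Import all_boot all_order all_algebra.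
From mathcomp Require Import all_classical all_reals all_analysis.
From mathcomp Require Import zify ring.
Import Order.TTheory GRing.Theory Num.Theory numFieldNormedType.Exports.
Local Open Scope ring_scope.
Local Open Scope classical_set_scope.

(* Both bounds come from running a code for a weaker constraint in a diluted
   way.  An (alpha,1,p)-constrained code on m cells is run on every beta-th
   cell of m*beta cells: beta contiguous cells contain exactly one used cell,
   so the new code is (alpha,beta,p)-constrained, with the same messages and
   rates divided by beta; hence C_(m beta)(alpha,beta,p) >= C_m(alpha,1,p)/beta.
   A (1,beta,p)-constrained code is run only at the writes whose index is a
   multiple of alpha, the other writes carrying a single message and leaving
   the memory untouched: alpha consecutive rewrites contain at most one real
   one, and the rate is divided by alpha; hence
   C_n(alpha,beta,p) >= C_n(1,beta,p)/alpha.  Both inequalities pass to the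
   limit n -> oo. *)

Lemma leq_sum_ord_multiple d s P (F : 'I_d -> nat) :
  (forall l : 'I_d, ~~ (d %| s + l)%N -> F l = 0%N) ->
  (forall l : 'I_d, (d %| s + l)%N -> (F l <= P)%N) ->
  (\sum_(l < d) F l <= P)%N.
Proof.
move=> F0 FP; have [l0 dvd_l0|no_dvd] := pickP (fun l : 'I_d => d %| s + l)%N;
  last by rewrite big1 // => l _; apply: F0; rewrite no_dvd.
rewrite (bigD1 l0) //= big1 ?addn0 ?FP // => l ne_l_l0; apply: F0.
apply: contra ne_l_l0 => dvd_l; apply/eqP/val_inj/eqP => /=.
by rewrite -(modn_small (ltn_ord l)) -(modn_small (ltn_ord l0)) -(eqn_modDl s)
  (eqP dvd_l) (eqP dvd_l0).
Qed.

Definition tuple_of_fun {T : Type} k (f : nat -> T) : k.-tuple T :=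
  @Tuple k T (mkseq f k) (introT eqP (size_mkseq f k)).

Lemma nth_tuple_of_fun {T : Type} (x0 : T) k f j :
  (j < k)%N -> nth x0 (tuple_of_fun k f) j = f j.
Proof. by move=> lt_jk; rewrite /= nth_mkseq. Qed.

Lemma eq_from_nth_tuple {T : Type} (x0 : T) k (u v : k.-tuple T) :
  (forall j, (j < k)%N -> nth x0 u j = nth x0 v j) -> u = v.
Proof.
move=> eq_uv; apply/val_inj/(eq_from_nth (x0 := x0)); first by rewrite !size_tuple.
by move=> j; rewrite size_tuple; apply: eq_uv.
Qed.

Lemma sup_divr_le (R : realType) (A B : set R) (k M : R) :
  0 < k -> B 0 -> ubound B M -> (forall a, A a -> B (a / k)) -> sup A / k <= sup B.
Proof.
move=> k_gt0 B0 B_ub AB.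
have supB : has_sup B by split; [exists 0 | exists M].
have [[[a Aa] _]|no_supA] := pselect (has_sup A);
  last by rewrite sup_out // mul0r; apply: sup_upper_bound.
rewrite ler_pdivrMr //; apply: ge_sup; first by exists a.
by move=> y Ay; rewrite -ler_pdivrMr //; apply: sup_upper_bound (AB _ Ay).
Qed.

Lemma limn_divr_le (R : realType) (u v : nat -> R) (k : R) :
  cvgn u -> cvgn v -> (\forall m \near \oo, u m / k <= v m) -> limn u / k <= limn v.
Proof.
move=> cvg_u cvg_v le_uv; have cvg_uk := cvgMr_tmp (b := k^-1) cvg_u.
rewrite -(cvg_lim (@Rhausdorff R) (cvg_uk _)); apply: ler_lim => //.
by apply/cvg_ex; exists (limn u / k); apply: cvg_uk.
Qed.

Section ConstrainedRates.
Set Implicit Arguments. Unset Strict Implicit.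
Variable R : realType.

Definition constrained_rates n a b p : set R :=
  [set r | exists c : Defs.code R n,
     [/\ valid_code c, constrained a b p c & has_rate c r]].

Lemma nmsg_le_exp2 n (c : Defs.code R n) i :
  valid_code c -> (1 <= i)%N -> (nmsg c i <= 2 ^ n)%N.
Proof.
move=> /(_ i) vc i_ge1; have [_ decK] := vc i_ge1.
pose encode (k : 'I_(nmsg c i)) : state n := enc c i k.+1 [tuple of nseq n false].
have encode_inj : injective encode.
  by move=> k1 k2 /(congr1 (dec c i)); rewrite !decK ?ltn_ord // => -[/val_inj].
by have := leq_card _ encode_inj; rewrite card_ord card_tuple card_bool.
Qed.

(* A rate above 2 would give more than 2^(2n) > 2^n messages. *)
Lemma valid_rate_le2 n (c : Defs.code R n) i :
  (0 < n)%N -> valid_code c -> (1 <= i)%N -> rate_at c i <= 2.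
Proof.
move=> n_gt0 vc i_ge1; rewrite leNgt; apply/negP => rate_gt2.
have := nmsg_le_exp2 vc i_ge1; apply/negP; rewrite -ltnNge /nmsg truncn_gt_nat.
apply: (@le_trans _ _ (2 `^ (n%:R * 2))).
  rewrite -natrM powR_mulrn // -natrX ler_nat expnM -(prednK n_gt0) expnS.
  by have := expn_gt0 2 n.-1; nia.
apply: ler_powR; first by rewrite ler1n.
by rewrite ler_pM2l ?ltW // ltr0n.
Qed.

Lemma constrained_rates_ub n a b p :
  (0 < n)%N -> ubound (constrained_rates n a b p) 2.
Proof.
move=> n_gt0 r [c [vc _ rate_r]].
rewrite -(cvg_lim (@Rhausdorff R) rate_r); apply: limr_le; first by apply/cvg_ex; exists r.
apply: nearW => m; rewrite ler_pdivrMr ?ltr0n //.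
apply: (@le_trans _ _ (\sum_(1 <= i < m.+2) (2 : R))).
  by apply: ler_sum_nat => i /andP[i_ge1 _]; apply: valid_rate_le2.
by rewrite sumr_const_nat subn1 mulr_natr.
Qed.

Definition idle_code n : Defs.code R n :=
  Code (fun _ => 0) (fun _ _ u => u) (fun _ _ => 1%N).

Lemma constrained_rates0 n a b p : constrained_rates n a b p 0.
Proof.
exists (idle_code n); split.
- move=> i _; split=> // m u.
  by rewrite /nmsg /= mulr0 powRr0 truncn1 -eqn_leq => /eqP.
- move=> ms _ i j _; rewrite /window_cost big1 // => k _.
  by rewrite big1 // => l _; rewrite /= eqxx.
- apply: cvg_near_cst; apply: nearW => m.
  by rewrite big1 ?mul0r.
Qed.

Lemma Cn_divr_le n n' a b p a' b' p' (k : R) :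
  (0 < n')%N -> 0 < k ->
  (forall r, constrained_rates n a b p r -> constrained_rates n' a' b' p' (r / k)) ->
  Cn R n a b p / k <= Cn R n' a' b' p'.
Proof.
move=> n'_gt0 k_gt0 incl; apply: sup_divr_le => //.
- exact: constrained_rates0.
- exact: constrained_rates_ub.
Qed.

Section Spread.
Variables (b m : nat).
Hypothesis b_gt0 : (0 < b)%N.

Definition compress (u : state (m * b)) : state m :=
  tuple_of_fun m (fun l => nth false u (l * b)).

Definition spread (v : state m) : state (m * b) :=
  tuple_of_fun (m * b) (fun j => (b %| j)%N && nth false v (j %/ b)).

Lemma nth_spread v j : nth false (spread v) j = (b %| j)%N && nth false v (j %/ b).
Proof.
have [lt_j_mb|le_mb_j] := ltnP j (m * b); first by rewrite nth_tuple_of_fun.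
rewrite !nth_default ?size_tuple ?andbF //.
by rewrite leqNgt ltn_divLR // -leqNgt.
Qed.

Lemma spreadK : cancel spread compress.
Proof.
move=> v; apply: (eq_from_nth_tuple false) => l lt_lm.
by rewrite nth_tuple_of_fun // nth_spread mulnK // dvdn_mull.
Qed.

Definition spread_code (c : Defs.code R m) : Defs.code R (m * b) :=
  Code (fun i => rate_at c i / b%:R)
    (fun i msg u => spread (enc c i msg (compress u)))
    (fun i s => dec c i (compress s)).

Lemma nmsg_spread c i : nmsg (spread_code c) i = nmsg c i.
Proof.
rewrite /nmsg /= natrM; congr (Num.truncn (2 `^ _)).
by field; rewrite pnatr_eq0 -lt0n.
Qed.

Lemma states_spread c ms i : states (spread_code c) ms i = spread (states c ms i).
Proof.
elim: i => [|i IHi] /=; last by rewrite IHi spreadK.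
apply: (eq_from_nth_tuple false) => j lt_j; rewrite nth_spread /= !nth_nseq lt_j.
by case: ifP; rewrite andbF.
Qed.

Lemma spread_valid c : valid_code c -> valid_code (spread_code c).
Proof.
move=> vc i i_ge1; have [rate_ge0 decK] := vc i i_ge1; split.
  by rewrite divr_ge0 ?ler0n.
by move=> msg u; rewrite nmsg_spread /= spreadK; apply: decK.
Qed.

Lemma spread_constrained a p c :
  constrained a 1 p c -> constrained a b p (spread_code c).
Proof.
move=> cc ms ms_ok i j le_jb_mb.
have ms_ok_c : msg_seq c ms by move=> k k_ge1; rewrite -nmsg_spread; apply: ms_ok.
rewrite /window_cost exchange_big; apply: (leq_sum_ord_multiple b j) => l.
  move=> not_dvd; apply: big1 => k _.
  by rewrite !states_spread !nth_spread (negbTE not_dvd).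
move=> dvd_jl; apply: (@leq_trans (window_cost c ms a 1 i ((j + l) %/ b))).
  apply: leq_sum => k _.
  by rewrite big_ord1 addn0 !states_spread !nth_spread dvd_jl.
apply: cc => //; rewrite addn1 ltn_divLR //; apply: leq_trans le_jb_mb.
by rewrite ltn_add2l.
Qed.

Lemma spread_rate c r : has_rate c r -> has_rate (spread_code c) (r / b%:R).
Proof.
move=> rate_r; rewrite /has_rate.
under eq_fun => k do rewrite /= -mulr_suml mulrAC.
exact: cvgMr_tmp.
Qed.

Lemma Cn_spread a p : (0 < m)%N -> Cn R m a 1 p / b%:R <= Cn R (m * b) a b p.
Proof.
move=> m_gt0; apply: Cn_divr_le; rewrite ?muln_gt0 ?m_gt0 ?ltr0n //.
move=> r [c [vc cc rate_r]]; exists (spread_code c).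
by split; [apply: spread_valid | apply: spread_constrained | apply: spread_rate].
Qed.

End Spread.

Lemma cvg_divn_ratio a : (0 < a)%N ->
  (fun k : nat => ((k.+1 %/ a)%:R / (k.+1)%:R : R)) @ \oo --> (a%:R^-1 : R).
Proof.
move=> a_gt0; have a_neq0 : (a%:R : R) != 0 by rewrite pnatr_eq0 -lt0n.
apply: (squeeze_cvgr (f := fun k => a%:R^-1 - (k.+1)%:R^-1) (h := fun=> a%:R^-1)).
- apply: nearW => k; apply/andP; split.
    have le_k_ceil : ((k.+1)%:R : R) <= (k.+1 %/ a).+1%:R * a%:R.
      by rewrite -natrM ler_nat ltnW // ltn_ceil.
    have -> : a%:R^-1 - (k.+1)%:R^-1 = ((k.+1)%:R / a%:R - 1) / (k.+1)%:R :> R.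
      by field; rewrite [1 + _]addrC natr1 pnatr_eq0.
    rewrite ler_pdivrMr ?ltr0n // divfK ?pnatr_eq0 // lerBlDr.
    by rewrite ler_pdivrMr ?ltr0n // natr1.
  rewrite ler_pdivrMr ?ltr0n // mulrC ler_pdivlMr ?ltr0n //.
  by rewrite -natrM ler_nat leq_divM.
- rewrite -[X in _ --> X]subr0; apply: cvgB; first exact: cvg_cst.
  exact: cvg_harmonic.
- exact: cvg_cst.
Qed.

Section Stretch.
Variables (a n : nat).
Hypothesis a_gt0 : (0 < a)%N.

Definition stretch_code (c : Defs.code R n) : Defs.code R n :=
  Code (fun i => if (a %| i)%N then rate_at c (i %/ a) else 0)
    (fun i msg u => if (a %| i)%N then enc c (i %/ a) msg u else u)
    (fun i s => if (a %| i)%N then dec c (i %/ a) s else 1%N).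

Lemma nmsg_stretch c i :
  nmsg (stretch_code c) i = if (a %| i)%N then nmsg c (i %/ a) else 1%N.
Proof. by rewrite /nmsg /=; case: ifP => // _; rewrite mulr0 powRr0 truncn1. Qed.

Lemma states_stretch c ms i :
  states (stretch_code c) ms i = states c (fun k => ms (k * a)%N) (i %/ a).
Proof.
elim: i => [|i IHi]; first by rewrite div0n.
rewrite /= IHi; case: ifP => dvd_i1; last by rewrite divnS // dvd_i1.
have succ_quot : (i.+1 %/ a = (i %/ a).+1)%N by rewrite divnS // dvd_i1.
by rewrite succ_quot /= -succ_quot divnK.
Qed.

Lemma sum_rate_stretch c M : \sum_(1 <= i < M.+1) rate_at (stretch_code c) i =
  \sum_(1 <= k < (M %/ a).+1) rate_at c k.
Proof.
elim: M => [|M IHM]; first by rewrite div0n !big_geq.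
rewrite big_nat_recr //= IHM (divnS _ a_gt0); case: (a %| M.+1)%N.
  by rewrite add1n [in RHS]big_nat_recr.
by rewrite add0n addr0.
Qed.

Lemma stretch_valid c : valid_code c -> valid_code (stretch_code c).
Proof.
move=> vc i i_ge1; rewrite /= nmsg_stretch; case: ifP => dvd_i /=; last first.
  by split=> // msg u; rewrite -eqn_leq => /eqP.
have [|rate_ge0 decK] := vc (i %/ a)%N; first by rewrite divn_gt0 // dvdn_leq.
by split=> // msg u; apply: decK.
Qed.

Lemma stretch_constrained b p c :
  constrained 1 b p c -> constrained a b p (stretch_code c).
Proof.
move=> cc ms ms_ok i j le_jb_n; pose ms_c k := ms (k * a)%N.
have ms_c_ok : msg_seq c ms_c.
  move=> k k_ge1; have := ms_ok (k * a)%N.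
  by rewrite nmsg_stretch dvdn_mull // mulnK // muln_gt0 k_ge1; apply.
rewrite /window_cost; apply: (leq_sum_ord_multiple a i.+1) => k; rewrite addSn.
  move=> not_dvd; apply: big1 => l _.
  by rewrite [states _ _ (i + k).+1]/= (negbTE not_dvd) eqxx.
move=> dvd_ik; apply: (@leq_trans (window_cost c ms_c 1 b ((i + k) %/ a) j)).
  by rewrite /window_cost big_ord1 addn0 !states_stretch (divnS _ a_gt0) dvd_ik add1n.
exact: cc.
Qed.

Lemma stretch_rate c r : has_rate c r -> has_rate (stretch_code c) (r / a%:R).
Proof.
move=> rate_r; rewrite /has_rate; under eq_fun => k do rewrite sum_rate_stretch.
(* The k-th average of the stretched code is the (g k)-th average of c times
   ((k + 1) %/ a) / (k + 1). *)
pose g k := (k.+1 %/ a).-1.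
have g_oo : g @ \oo --> \oo.
  have := cvg_comp _ _ (cvg_comp _ _ (cvg_addnr 1) (cvg_divnr a a_gt0)) (cvg_subnr 1).
  by apply: cvg_trans; apply: near_eq_cvg; apply: nearW => k; rewrite /g /= addn1 subn1.
have cvg_prod := cvgM (cvg_comp _ _ g_oo rate_r) (cvg_divn_ratio a_gt0).
apply: (cvg_trans _ (cvg_prod _)); apply: near_eq_cvg; exists a => // k /= le_ak.
have quot_gt0 : (0 < k.+1 %/ a)%N by rewrite divn_gt0 // ltnW.
by rewrite /g prednK // mulrA divfK // pnatr_eq0 -lt0n.
Qed.

Lemma Cn_stretch b p : (0 < n)%N -> Cn R n 1 b p / a%:R <= Cn R n a b p.
Proof.
move=> n_gt0; apply: Cn_divr_le; rewrite ?ltr0n //.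
move=> r [c [vc cc rate_r]]; exists (stretch_code c).
by split; [apply: stretch_valid | apply: stretch_constrained | apply: stretch_rate].
Qed.

End Stretch.

End ConstrainedRates.

Theorem theorem8 (R : realType) (alpha beta p : nat)
  (halpha : (0 < alpha)%N) (hbeta : (0 < beta)%N) (hp : (0 < p)%N)
  (cv_ab : cvgn (Cseq R alpha beta p))
  (cv_a1 : cvgn (Cseq R alpha 1 p))
  (cv_1b : cvgn (Cseq R 1 beta p)) :
  Num.max (Ccap R alpha 1 p / beta%:R) (Ccap R 1 beta p / alpha%:R)
    <= Ccap R alpha beta p.
Proof.
rewrite ge_max; apply/andP; split.
- have cvg_sub := cvg_comp _ _ (cvg_mulnr beta hbeta) cv_ab.
  rewrite /Ccap -(cvg_lim (@Rhausdorff R) cvg_sub).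
  apply: limn_divr_le => //; first by apply/cvg_ex; eexists; exact: cvg_sub.
  by exists 1%N => // m m_gt0; apply: Cn_spread.
- apply: limn_divr_le => //.
  by exists 1%N => // m m_gt0; apply: Cn_stretch.
Qed.
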